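(* Let $c$ be a positive integer and let $\nu$ be the smallest positive integer that does not divide $c$. There is a constant $C$ depending only on $c$ such that for every integer $n>c$: (1) $\left|\mathrm{mup}(n,c)-\frac{n}{\nu}\right|\le C$; and (2) in every unique partition of $n$ and $c$ with exactly $\mathrm{mup}(n,c)$ parts, all but at most $C$ of the parts are equal to $\nu$.
   Context: A unique partition of positive integers $A$ and $B$ consists of positive integers $A_1,\dots,A_a$ with $\sum_i A_i=A$ and $B_1,\dots,B_b$ with $\sum_j B_j=B$ such that, viewing these as $a+b$ indexed items, the only subsets of the items whose sum equals $A$ are the set of items $\{A_1,\dots,A_a\}$ and, in case $A=B$, also its complement. Its parts are the $a+b$ numbers $A_i,B_j$. $\mathrm{mup}(A,B)$ is the maximum of $a+b$ over all unique partitions of $A$ and $B$ (with $\mathrm{mup}(1,1)=2$). *)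

From mathcomp Require Import all_boot all_order all_algebra.
From Stdlib Require Import ClassicalEpsilon.
Set Implicit Arguments. Unset Strict Implicit. Unset Printing Implicit Defensive.

(* A unique partition of A and B: parts sA (summing to A) and sB (summing to B),
   all positive, viewed as size sA + size sB indexed items (the items of sA first,
   then those of sB); the only index subsets whose parts sum to A are the index
   set of sA and, when A = B, its complement. *)
Definition unique_partition (A B : nat) (sA sB : seq nat) : Prop :=
  all (fun x => 0 < x) (sA ++ sB) /\ sumn sA = A /\ sumn sB = B /\
  forall S : {set 'I_(size sA + size sB)},
    \sum_(i in S) nth 0 (sA ++ sB) i = A ->
    S = [set i : 'I_(size sA + size sB) | i < size sA]
    \/ (A = B /\ S = [set i : 'I_(size sA + size sB) | size sA <= i]).

Definition has_up (A B k : nat) : Prop :=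
  exists sA sB, unique_partition A B sA sB /\ size sA + size sB = k.

(* mupart A B (the paper's mup; renamed to avoid clash with polydiv.mup) = max number of parts of a unique partition of A and B.
   Since all parts are positive, the number of parts is at most A + B. *)
Definition mupart (A B : nat) : nat :=
  \max_(k < (A + B).+1)
     (if excluded_middle_informative (has_up A B k) then (k : nat) else 0).

From mathcomp Require Import all_boot all_order all_algebra.
Import Order.TTheory GRing.Theory Num.Theory.
From mathcomp Require Import zify lra.
From Stdlib Require Import ClassicalEpsilon.
Set Implicit Arguments. Unset Strict Implicit. Unset Printing Implicit Defensive.

(* For n > c, no sub-multiset of the n-parts of a unique partition sums to c,
   since its complement would be a second set of parts summing to n.  Every
   k with 0 < k < nu divides c, so fewer than c / k of the n-parts equal k; the c-parts
   number at most c; all other parts are at least nu, and those exceeding nu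
   each cost one more unit of n.  This gives mup(n, c) <= n / nu + O(1), and
   once mup(n, c) >= n / nu - O(1) only O(1) parts can differ from nu.  The
   lower bound comes from n = r + nu + ... + nu and c = c with c < r <= c + nu:
   a sub-multiset of these n-parts either contains r > c or sums to a multiple
   of nu, which c is not. *)

Definition subsum_free (s : seq nat) (b : nat) : Prop :=
  forall t, subseq t s -> sumn t != b.

Lemma sumn_mask (s : seq nat) (m : bitseq) :
  sumn (mask m s) = \sum_(i < size s | nth false m i) nth 0 s i.
Proof.
rewrite sumnE big_mask; apply: eq_big => [i | i _]; first by rewrite andbT.
by rewrite (tnth_nth 0).
Qed.

Lemma big_ord_nth_sumn (s : seq nat) : \sum_(i < size s) nth 0 s i = sumn s.
Proof. by rewrite sumnE (big_nth 0) big_mkord. Qed.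

Lemma size_le_sumn (s : seq nat) : all (fun x => 0 < x) s -> size s <= sumn s.
Proof. by elim: s => //= x s IH /andP [x_gt0 /IH]; lia. Qed.

Lemma subsum_free_sum_set (s : seq nat) (b : nat) (T : {set 'I_(size s)}) :
  subsum_free s b -> \sum_(i in T) nth 0 s i != b.
Proof.
move=> /(_ _ (mask_subseq [seq i \in T | i <- enum 'I_(size s)] s)).
rewrite sumn_mask; congr (_ != _); apply: eq_bigl => i.
by rewrite (nth_map i) ?nth_ord_enum // size_enum_ord.
Qed.

Lemma subsum_free_dvd (d b : nat) (s : seq nat) :
  all (dvdn d) s -> ~~ (d %| b) -> subsum_free s b.
Proof.
move=> /allP d_s d_b t /mem_subseq t_s; apply: contraNneq d_b => <-.
by rewrite sumnE big_seq dvdn_sum // => x /t_s /d_s.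
Qed.

Lemma subsum_free_cons (r b : nat) (s : seq nat) :
  b < r -> subsum_free s b -> subsum_free (r :: s) b.
Proof.
move=> b_lt_r s_free [|x t] /=; first by move=> _; apply: s_free (sub0seq s).
by case: eqP => [-> _ | _ /s_free //]; rewrite gtn_eqF // ltn_addr.
Qed.

Lemma count_lt_subsum_free (s : seq nat) (b k : nat) :
  subsum_free s b -> k %| b -> count (pred1 k) s < b %/ k.
Proof.
move=> s_free k_b; rewrite ltnNge; apply/negP => le_bk.
have: subseq (nseq (b %/ k) k) s.
  apply: subseq_trans (filter_subseq (pred1 k) s).
  rewrite [filter _ _](all_pred1P _ _ (filter_all _ _)) size_filter.
  by rewrite -(take_nseq k le_bk) take_subseq.
by move/s_free; rewrite sumn_nseq mulnC divnK ?eqxx.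
Qed.

Lemma count_ltS (m : nat) (s : seq nat) :
  count (fun x => x < m.+1) s = count (fun x => x < m) s + count (pred1 m) s.
Proof. by elim: s => //= x s ->; case: ltngtP => /=; lia. Qed.

Lemma count_small_subsum_free (s : seq nat) (b m : nat) :
  subsum_free s b -> all (fun x => 0 < x) s ->
  (forall k, 0 < k < m -> k %| b) -> count (fun x => x < m) s <= m * b.
Proof.
move=> s_free s_pos; elim: m => [|m IH] m_dvd.
  by rewrite (@eq_count _ _ pred0) ?count_pred0.
rewrite count_ltS mulSn addnC leq_add ?IH //; first last.
  by move=> k /andP [k_gt0 k_lt]; apply: m_dvd; rewrite k_gt0 ltnW.
case: m {IH} m_dvd => [_ | m m_dvd].
  apply: (leq_trans _ (leq0n b)); rewrite leqNgt -has_count.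
  by apply/hasPn => x /(allP s_pos); rewrite lt0n.
have m_b : m.+1 %| b by apply: m_dvd; rewrite /= ltnS leqnn.
exact: leq_trans (ltnW (count_lt_subsum_free s_free m_b)) (leq_div _ _).
Qed.

Lemma size_weighted_le (nu : nat) (s : seq nat) :
  nu * size s + count (fun x => nu < x) s <= sumn s + nu * count (fun x => x < nu) s.
Proof. by elim: s => [|x s IH] /=; [rewrite !muln0 | case: ltngtP => /=; lia]. Qed.

Lemma count_neq_split (nu : nat) (s : seq nat) :
  count (fun x => x != nu) s = count (fun x => x < nu) s + count (fun x => nu < x) s.
Proof. by elim: s => //= x s ->; case: ltngtP => /=; lia. Qed.

Lemma sum_cat_setC (sA sB : seq nat) (S : {set 'I_(size sA + size sB)}) :
  \sum_(i in S) nth 0 (sA ++ sB) i + \sum_(i in ~: S) nth 0 (sA ++ sB) i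
  = sumn sA + sumn sB.
Proof.
have := big_ord_nth_sumn (sA ++ sB); rewrite sumn_cat => <-.
rewrite size_cat [RHS](bigID (mem S)) /=; congr (_ + _).
by apply: eq_bigl => i; rewrite inE.
Qed.

Lemma unique_partition_subsum_free (A B : nat) (sA sB : seq nat) :
  unique_partition A B sA sB -> A != B -> 0 < B -> subsum_free sA B.
Proof.
move=> [_ [sumA [sumB sA_unique]]] A_neq_B B_gt0 t /subseqP [m size_m ->].
apply/eqP => sum_mask.
pose T := [set i : 'I_(size sA + size sB) | nth false m i].
have sum_T : \sum_(i in T) nth 0 (sA ++ sB) i = B.
  rewrite -sum_mask sumn_mask big_split_ord /= [X in _ + X]big_pred0 => [|j].
    by rewrite addn0; apply: eq_big => [i | i _]; rewrite ?inE //= nth_cat ltn_ord.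
  by rewrite inE nth_default // size_m leq_addr.
have sum_CT : \sum_(i in ~: T) nth 0 (sA ++ sB) i = A.
  by apply/eqP; rewrite -(eqn_add2l B) -{1}sum_T sum_cat_setC sumA sumB addnC.
have sB_gt0 : 0 < size sB.
  by rewrite lt0n size_eq0; apply: contraTneq B_gt0 => sB0; rewrite -sumB sB0.
case: (sA_unique _ sum_CT) => [CT_eq | [A_eq_B _]]; last first.
  by rewrite A_eq_B eqxx in A_neq_B.
have /setP/(_ (rshift (size sA) (Ordinal sB_gt0))) := CT_eq.
by rewrite !inE /= addn0 ltnn nth_default ?size_m.
Qed.

Lemma unique_partition_single (A B : nat) (sA : seq nat) :
  all (fun x => 0 < x) sA -> sumn sA = A -> 0 < B -> subsum_free sA B ->
  unique_partition A B sA [:: B].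
Proof.
move=> sA_pos sumA B_gt0 sA_free.
split; first by rewrite all_cat sA_pos /= B_gt0.
split=> //; split=> [|S sum_S]; first by rewrite /= addn0.
left.
have sum_CS : \sum_(i in ~: S) nth 0 (sA ++ [:: B]) i = B.
  by apply/eqP; rewrite -(eqn_add2l A) -{1}sum_S sum_cat_setC sumA /= addn0.
pose T := [set i : 'I_(size sA) | lshift 1 i \notin S].
have split_CS : \sum_(i in ~: S) nth 0 (sA ++ [:: B]) i
    = \sum_(i in T) nth 0 sA i + (if rshift (size sA) ord0 \in S then 0 else B).
  rewrite big_split_ord /= [X in _ + X]big_mkcond big_ord1 /=; congr (_ + _).
    by apply: eq_big => [i | i _]; rewrite ?inE //= nth_cat ltn_ord.
  by rewrite inE addn0 nth_cat ltnn subnn; case: (_ \in S).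
case last_S : (rshift (size sA) ord0 \in S) in split_CS.
  by have := subsum_free_sum_set T sA_free; rewrite -sum_CS split_CS addn0 eqxx.
have /eqP : \sum_(i in T) nth 0 sA i = 0 by move: split_CS; rewrite sum_CS; lia.
rewrite sum_nat_eq0 => /forallP T_zero.
apply/setP => i; rewrite inE.
case: split_ordP => [j -> | k ->]; last by rewrite ord1 last_S.
apply/negPn/negP => j_notS; have := T_zero j; rewrite inE j_notS /=.
by apply/negP; rewrite -lt0n; apply: (all_nthP 0 sA_pos).
Qed.

Lemma has_up_le_mupart (A B k : nat) : has_up A B k -> k <= mupart A B.
Proof.
move=> up_k; have k_lt : k < (A + B).+1.
  case: up_k => sA [sB [[pos [sumA [sumB _]]] <-]].
  by rewrite ltnS -sumA -sumB -size_cat -sumn_cat size_le_sumn.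
have := leq_bigmax (F := fun i : 'I_(A + B).+1 =>
  if excluded_middle_informative (has_up A B i) then (i : nat) else 0) (Ordinal k_lt).
by case: excluded_middle_informative.
Qed.

Lemma mupart_le (A B M : nat) :
  (forall sA sB, unique_partition A B sA sB -> size sA + size sB <= M) ->
  mupart A B <= M.
Proof.
move=> up_le; apply/bigmax_leqP => i _.
case: excluded_middle_informative => [[sA [sB [up size_eq]]] | _] //=.
by rewrite -size_eq up_le.
Qed.

Lemma unique_partition_count_neq_le (c nu n : nat) (sA sB : seq nat) :
  0 < c -> (forall k, 0 < k < nu -> k %| c) -> c < n -> unique_partition n c sA sB ->
  count (fun x => x != nu) (sA ++ sB) + nu * (size sA + size sB)
    <= n + nu.+1 * (nu.+1 * c).
Proof.
move=> c_gt0 nu_min c_lt_n up; have [pos [sumA [sumB _]]] := up.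
move: pos; rewrite all_cat => /andP [sA_pos sB_pos].
have small : count (fun x => x < nu) sA <= nu * c.
  apply: count_small_subsum_free nu_min => //.
  by apply: unique_partition_subsum_free up _ c_gt0; rewrite gtn_eqF.
have size_sB : size sB <= c by rewrite -sumB size_le_sumn.
have := size_weighted_le nu sA; rewrite sumA => weighted.
rewrite count_cat count_neq_split.
apply: leq_trans (leq_add (leq_add (leqnn _) (count_size _ sB)) (leqnn _)) _.
have := leq_mul (leqnn nu) small; have := leq_mul (leqnn nu) size_sB.
lia.
Qed.

Lemma has_up_nu_parts (c nu n : nat) :
  0 < c -> 0 < nu -> ~~ (nu %| c) -> c < n -> has_up n c ((n - c.+1) %/ nu).+2.
Proof.
move=> c_gt0 nu_gt0 nu_ndvd_c c_lt_n.
set q := (n - c.+1) %/ nu; set r := c.+1 + (n - c.+1) %% nu.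
exists (r :: nseq q nu), [:: c]; split; last by rewrite /= size_nseq addn1.
apply: unique_partition_single => //.
- by rewrite /= all_nseq nu_gt0 orbT; lia.
- by rewrite /= sumn_nseq /r /q (divn_eq (n - c.+1) nu); lia.
- apply: subsum_free_cons; first by rewrite /r ltnS leq_addr.
  by apply: subsum_free_dvd nu_ndvd_c; rewrite all_nseq dvdnn orbT.
Qed.

Lemma mupart_lower (c nu n : nat) :
  0 < c -> 0 < nu -> ~~ (nu %| c) -> c < n -> n <= nu * mupart n c + c.
Proof.
move=> c_gt0 nu_gt0 nu_ndvd_c c_lt_n.
have := has_up_le_mupart (has_up_nu_parts c_gt0 nu_gt0 nu_ndvd_c c_lt_n).
have := divn_eq (n - c.+1) nu; have := ltn_pmod (n - c.+1) nu_gt0; nia.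
Qed.

Lemma mupart_upper (c nu n : nat) :
  0 < c -> 0 < nu -> (forall k, 0 < k < nu -> k %| c) -> c < n ->
  nu * mupart n c <= n + nu.+1 * (nu.+1 * c).
Proof.
move=> c_gt0 nu_gt0 nu_min c_lt_n; rewrite mulnC -leq_divRL //.
apply: mupart_le => sA sB up; rewrite leq_divRL // mulnC.
exact: leq_trans (leq_addl _ _) (unique_partition_count_neq_le c_gt0 nu_min c_lt_n up).
Qed.

Lemma abs_sub_divn_le (R : realFieldType) (m n d e : nat) :
  0 < d -> d * m <= n + d * e -> n <= d * m + d * e ->
  (`|m%:R - n%:R / d%:R| <= e%:R :> R)%R.
Proof.
move=> d_gt0 upper lower.
have d_pos : (0 < d%:R :> R)%R by rewrite ltr0n.
set y := (n%:R / d%:R)%R.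
have n_eq : (n%:R = y * d%:R :> R)%R by rewrite divfK ?gt_eqF.
move: upper lower; rewrite -!(ler_nat R) !natrD !natrM n_eq => upper lower.
rewrite ler_norml; apply/andP; split; nra.
Qed.

Theorem proposition3p2 (c : nat) (hc : (0 < c)%N)
  (nu : nat) (hnu0 : (0 < nu)%N) (hnu : ~~ (nu %| c)%N)
  (hmin : forall k : nat, (0 < k < nu)%N -> (k %| c)%N) :
  exists C : nat, forall n : nat, (c < n)%N ->
    (`| ((mupart n c)%:R : rat) - ((n%:R : rat) / (nu%:R : rat)) | <= (C%:R : rat))%R /\
    (forall sA sB : seq nat, unique_partition n c sA sB ->
       size sA + size sB = mupart n c ->
       (count (fun x => x != nu) (sA ++ sB) <= C)%N).
Proof.
exists (nu.+2 * (nu.+1 * c)) => n c_lt_n.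
have lower := mupart_lower hc hnu0 hnu c_lt_n.
have upper := mupart_upper hc hnu0 hmin c_lt_n.
split; first by apply: abs_sub_divn_le => //; nia.
move=> sA sB up size_eq.
have := unique_partition_count_neq_le hc hmin c_lt_n up; rewrite size_eq; nia.
Qed.
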